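(* Every cograph admits a canonical dominating set.
   Context: All graphs are finite, simple and undirected. The union $G_1\cup G_2$ of two vertex-disjoint graphs has vertex set $V(G_1)\cup V(G_2)$ and edge set $E(G_1)\cup E(G_2)$; the join $G_1\vee G_2$ additionally contains all edges $vw$ with $v\in V(G_1)$, $w\in V(G_2)$. Cographs are defined recursively: a single vertex is a cograph, and the union and the join of two cographs are cographs. A set $D\subseteq V(G)$ is a dominating set if every vertex of $G$ is in $D$ or adjacent to a vertex of $D$. Two dominating sets $D,D'$ are adjacent if $|D\triangle D'|=1$. For dominating sets $D_p,D_q$ and an integer $k>0$, write $D_p\leftrightarrow_k D_q$ if there is a sequence $D_0=D_p,\dots,D_\ell=D_q$ ($\ell\ge0$) of dominating sets of $G$ with consecutive sets adjacent and $|D_i|\le k$ for all $i$. A minimum dominating set $D^*$ of $G$ is canonical if $D\leftrightarrow_{|D|+1} D^*$ for every dominating set $D$ of $G$. *)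

(* A simple graph is a symmetric irreflexive relation e on a finType T. *)
From mathcomp Require Import all_boot.
Set Implicit Arguments. Unset Strict Implicit. Unset Printing Implicit Defensive.

Section Graphs.
Variables (T : finType) (e : rel T).

(* Cographs, stated for induced subgraphs G[S]: G[S] is a cograph iff it is a
   single vertex, or S splits into two disjoint (nonempty, since cographs are
   nonempty) parts A, B, each inducing a cograph, with either no edge (union)
   or every edge (join) between A and B. *)
Inductive cograph_on : {set T} -> Prop :=
  | cograph_single (v : T) : cograph_on [set v]
  | cograph_union (A B : {set T}) :
      [disjoint A & B] -> cograph_on A -> cograph_on B ->
      (forall a b, a \in A -> b \in B -> ~~ e a b) ->
      cograph_on (A :|: B)
  | cograph_join (A B : {set T}) :
      [disjoint A & B] -> cograph_on A -> cograph_on B ->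
      (forall a b, a \in A -> b \in B -> e a b) ->
      cograph_on (A :|: B).

Definition cograph : Prop := cograph_on [set: T].

Definition dominating (D : {set T}) : bool :=
  [forall v, (v \in D) || [exists u in D, e u v]].

Definition symdiff (D D' : {set T}) : {set T} := (D :\: D') :|: (D' :\: D).

Definition dom_adj (D D' : {set T}) : bool := #|symdiff D D'| == 1.

(* D_p <->_k D_q : a sequence D_0 = D_p, ..., D_l = D_q (l >= 0) of dominating
   sets, consecutive ones adjacent, all of size <= k. *)
Definition reconf (k : nat) (Dp Dq : {set T}) : Prop :=
  exists s : seq {set T},
    [/\ path dom_adj Dp s, last Dp s = Dq &
        all (fun D => dominating D && (#|D| <= k)) (Dp :: s)].

Definition min_dominating (D : {set T}) : Prop :=
  dominating D /\ forall D', dominating D' -> #|D| <= #|D'|.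

Definition canonical_dom (Ds : {set T}) : Prop :=
  min_dominating Ds /\
  forall D, dominating D -> reconf (#|D|).+1 D Ds.

End Graphs.

From mathcomp Require Import all_boot.
Set Implicit Arguments. Unset Strict Implicit. Unset Printing Implicit Defensive.

(* Induct along the cograph decomposition, for induced subgraphs G[S].  A single
   dominating vertex is canonical: any D reaches it through D + u.  For a union
   G[A] + G[B] a dominating set splits as (D :&: A) :|: (D :&: B), and the two
   canonical sets are reached one side at a time, the other side riding along
   unchanged.  For a join without a dominating vertex every dominating set has
   at least two vertices, and any pair {a, b} across the join is canonical:
   from D, with v in D, pass to the dominating pair {v, w} (w on the side of the
   join opposite to v) and then to {a, b}, never exceeding #|D| + 1 vertices. *)

Lemma cardsU1_le (T : finType) (x : T) (A : {set T}) : #|x |: A| <= #|A|.+1.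
Proof. by rewrite cardsU1 -add1n leq_add2r leq_b1. Qed.

Lemma dom_adj_sym (T : finType) (X Y : {set T}) : dom_adj X Y = dom_adj Y X.
Proof. by rewrite /dom_adj /symdiff setUC. Qed.

Lemma dom_adj_setD1 (T : finType) (X : {set T}) z : z \in X -> dom_adj X (X :\ z).
Proof.
move=> zX; rewrite /dom_adj /symdiff.
suff -> : (X :\: (X :\ z)) :|: ((X :\ z) :\: X) = [set z] by rewrite cards1.
apply/setP=> x; rewrite !inE; case: (eqVneq x z) => [->|]; rewrite ?zX //=.
by case: (x \in X).
Qed.

Lemma dom_adj_setUr (T : finType) (C X Y : {set T}) :
  [disjoint C & X :|: Y] -> dom_adj (X :|: C) (Y :|: C) = dom_adj X Y.
Proof.
move=> dC; rewrite /dom_adj /symdiff.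
suff -> : (X :|: C) :\: (Y :|: C) :|: (Y :|: C) :\: (X :|: C) =
          (X :\: Y) :|: (Y :\: X) by [].
apply/setP=> x; rewrite !inE; case xC: (x \in C); last by rewrite !orbF.
by move: (disjointFr dC xC); rewrite inE => /norP [/negbTE -> /negbTE ->].
Qed.

Section Reconfiguration.
Variables (T : finType) (e : rel T).
Implicit Types (S A B C D X Y Z : {set T}) (k : nat).

Definition dominating_in S D : bool :=
  (D \subset S) && [forall v in S, (v \in D) || [exists u in D, e u v]].

Inductive reconf_in S k : {set T} -> {set T} -> Prop :=
  | reconf_in_refl D : dominating_in S D -> #|D| <= k -> reconf_in S k D D
  | reconf_in_step D1 D2 D3 : dominating_in S D1 -> #|D1| <= k -> dom_adj D1 D2 ->
      reconf_in S k D2 D3 -> reconf_in S k D1 D3.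

Definition canonical_in S Ds : Prop :=
  [/\ dominating_in S Ds, forall D, dominating_in S D -> #|Ds| <= #|D| &
      forall D, dominating_in S D -> reconf_in S #|D|.+1 D Ds].

Lemma dominating_in_sub S D : dominating_in S D -> D \subset S.
Proof. by case/andP. Qed.

Lemma dominating_in_neq0 S D v : v \in S -> dominating_in S D -> D != set0.
Proof.
move=> vS /andP [_ /forall_inP /(_ v vS)] /orP [vD|/exists_inP [u uD _]].
  by apply/set0Pn; exists v.
by apply/set0Pn; exists u.
Qed.

Lemma dominating_inS S X Z :
  dominating_in S X -> X \subset Z -> Z \subset S -> dominating_in S Z.
Proof.
case/andP=> _ /forall_inP dX XZ ZS; rewrite /dominating_in ZS /=.
apply/forall_inP=> v /dX /orP [vX|/exists_inP [u uX euv]].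
  by rewrite (subsetP XZ _ vX).
by apply/orP; right; apply/exists_inP; exists u => //; apply: (subsetP XZ).
Qed.

Lemma dominating_in_setU A B X Y :
  dominating_in A X -> dominating_in B Y -> dominating_in (A :|: B) (X :|: Y).
Proof.
move=> /andP [XA /forall_inP dX] /andP [YB /forall_inP dY].
rewrite /dominating_in (setUSS XA YB) /=; apply/forall_inP=> v.
case/setUP=> [/dX|/dY] /orP [vD|/exists_inP [u uD euv]];
  rewrite ?inE ?vD ?orbT //; apply/orP; right; apply/exists_inP;
  by exists u; rewrite ?inE ?uD ?orbT.
Qed.

Lemma dominating_in_setI A B D :
  (forall b a, b \in B -> a \in A -> ~~ e b a) ->
  dominating_in (A :|: B) D -> dominating_in A (D :&: A).
Proof.
move=> noBA /andP [DS /forall_inP dD]; rewrite /dominating_in subsetIr /=.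
apply/forall_inP=> v vA.
have /orP [vD|/exists_inP [u uD euv]] := dD v (subsetP (subsetUl A B) v vA).
  by rewrite inE vD vA.
apply/orP; right; apply/exists_inP; exists u => //; rewrite inE uD /=.
by case/setUP: (subsetP DS u uD) => // uB; move: (noBA u v uB vA); rewrite euv.
Qed.

Lemma reconf_in_domL S k X Y : reconf_in S k X Y -> dominating_in S X.
Proof. by case. Qed.

Lemma reconf_in_cardL S k X Y : reconf_in S k X Y -> #|X| <= k.
Proof. by case. Qed.

Lemma reconf_in_trans S k X Y Z :
  reconf_in S k X Y -> reconf_in S k Y Z -> reconf_in S k X Z.
Proof.
elim=> // D1 D2 D3 dD1 D1k adj _ IH /IH rD2.
exact: reconf_in_step dD1 D1k adj rD2.
Qed.

Lemma reconf_in_sym S k X Y : reconf_in S k X Y -> reconf_in S k Y X.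
Proof.
elim=> [D dD Dk|D1 D2 D3 dD1 D1k adj r IH]; first exact: reconf_in_refl.
apply: reconf_in_trans IH _.
apply: reconf_in_step (reconf_in_domL r) (reconf_in_cardL r) _ (reconf_in_refl dD1 D1k).
by rewrite dom_adj_sym.
Qed.

Lemma reconf_in_le S k k' X Y :
  k <= k' -> reconf_in S k X Y -> reconf_in S k' X Y.
Proof.
move=> kk'; elim=> [D dD Dk|D1 D2 D3 dD1 D1k adj _ IH].
  exact: reconf_in_refl dD (leq_trans Dk kk').
exact: reconf_in_step dD1 (leq_trans D1k kk') adj IH.
Qed.

(* Supersets of X stay dominating, so the vertices of Z outside X can be deleted
   one at a time. *)
Lemma reconf_in_shrink S k X Z : X \subset Z -> Z \subset S ->
  dominating_in S X -> #|Z| <= k -> reconf_in S k Z X.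
Proof.
elim: {Z}_.+1 {-2}Z (ltnSn #|Z|) => // n IH Z ltZn XZ ZS dX Zk.
have dZ := dominating_inS dX XZ ZS.
have [eXZ|neXZ] := eqVneq X Z; first by rewrite -eXZ in Zk *; exact: reconf_in_refl.
have /properP [_ [z zZ zX]] : X \proper Z by rewrite properEneq neXZ.
apply: (reconf_in_step dZ Zk (dom_adj_setD1 zZ)).
have ltZz : #|Z :\ z| < #|Z| by rewrite (cardsD1 z Z) zZ.
apply: IH.
- exact: leq_trans ltZz ltZn.
- by apply/subsetP=> x xX; rewrite !inE (subsetP XZ) // andbT; apply: contraNneq zX => <-.
- exact: subset_trans (subsetDl _ _) ZS.
- exact: dX.
- exact: leq_trans (ltnW ltZz) Zk.
Qed.

Lemma reconf_in_union S k X Y : dominating_in S X -> dominating_in S Y ->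
  #|X :|: Y| <= k -> reconf_in S k X Y.
Proof.
move=> dX dY XYk.
have XYS : X :|: Y \subset S by rewrite subUset !dominating_in_sub.
apply: (reconf_in_trans (Y := X :|: Y)).
  by apply/reconf_in_sym/reconf_in_shrink => //; apply: subsetUl.
by apply: reconf_in_shrink => //; apply: subsetUr.
Qed.

Lemma reconf_in_setUr A B C k X Y : [disjoint A & B] -> dominating_in B C ->
  reconf_in A k X Y -> reconf_in (A :|: B) (k + #|C|) (X :|: C) (Y :|: C).
Proof.
move=> dAB dC.
have cardUC D : #|D| <= k -> #|D :|: C| <= k + #|C|.
  by move=> Dk; apply: leq_trans (leq_card_setU D C).1 (leq_add Dk (leqnn _)).
elim=> [D dD Dk|D1 D2 D3 dD1 D1k adj r IH].
  exact: reconf_in_refl (dominating_in_setU dD dC) (cardUC D Dk).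
apply: reconf_in_step (dominating_in_setU dD1 dC) (cardUC D1 D1k) _ IH.
rewrite dom_adj_setUr // disjoint_sym.
apply: disjointWl (disjointWr (dominating_in_sub dC) dAB).
by rewrite subUset (dominating_in_sub dD1) (dominating_in_sub (reconf_in_domL r)).
Qed.

Lemma canonical_in_set1 S u :
  u \in S -> dominating_in S [set u] -> canonical_in S [set u].
Proof.
move=> uS du; split=> // D dD; first by rewrite cards1 card_gt0 (dominating_in_neq0 uS dD).
by apply: reconf_in_union => //; rewrite setUC cardsU1_le.
Qed.

Section Union.
Variables (A B : {set T}).
Hypotheses (dAB : [disjoint A & B])
           (noAB : forall a b, a \in A -> b \in B -> ~~ e a b)
           (noBA : forall b a, b \in B -> a \in A -> ~~ e b a).

Lemma card_split_union D : D \subset A :|: B -> #|D| = #|D :&: A| + #|D :&: B|.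
Proof.
move=> DAB; rewrite -{1}(setIidPl DAB) setIUr; apply/eqP.
by rewrite (leq_card_setU _ _).2 (disjointWl (subsetIr _ _) (disjointWr (subsetIr _ _) dAB)).
Qed.

Lemma canonical_in_union DsA DsB : canonical_in A DsA -> canonical_in B DsB ->
  canonical_in (A :|: B) (DsA :|: DsB).
Proof.
move=> [dsA minA reachA] [dsB minB reachB].
have dIA D : dominating_in (A :|: B) D -> dominating_in A (D :&: A).
  exact: dominating_in_setI.
have dIB D : dominating_in (A :|: B) D -> dominating_in B (D :&: B).
  by rewrite setUC; apply: dominating_in_setI.
split=> [|D dD|D dD]; first exact: dominating_in_setU.
  rewrite (card_split_union (dominating_in_sub dD)).
  apply: leq_trans (leq_card_setU _ _).1 _.
  by rewrite leq_add ?minA ?minB ?dIA ?dIB.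
have cardD := card_split_union (dominating_in_sub dD).
have stepA := reconf_in_setUr dAB (dIB D dD) (reachA _ (dIA D dD)).
rewrite -setIUr (setIidPl (dominating_in_sub dD)) addSn -cardD in stepA.
have dBA : [disjoint B & A] by rewrite disjoint_sym.
have stepB := reconf_in_setUr dBA dsA (reachB _ (dIB D dD)).
rewrite [B :|: A]setUC ![_ :|: DsA]setUC in stepB.
apply: reconf_in_trans stepA (reconf_in_le _ stepB).
by rewrite cardD addSn ltnS addnC leq_add2r minA ?dIA.
Qed.

End Union.

Section Join.
Hypothesis esym : symmetric e.
Variables (A B : {set T}).
Hypothesis allAB : forall a b, a \in A -> b \in B -> e a b.

Lemma dominating_in_join_pair v w :
  v \in A -> w \in B -> dominating_in (A :|: B) [set v; w].
Proof.
move=> vA wB; rewrite /dominating_in subUset !sub1set !inE vA wB orbT /=.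
apply/forall_inP=> x /setUP [xA|xB]; apply/orP; right; apply/exists_inP.
  by exists w; rewrite ?inE ?eqxx ?orbT // esym allAB.
by exists v; rewrite ?inE ?eqxx ?orbT // allAB.
Qed.

Lemma canonical_in_join a b : a \in A -> b \in B ->
  exists Ds, canonical_in (A :|: B) Ds.
Proof.
move=> aA bB; have aS : a \in A :|: B by rewrite inE aA.
have [/exists_inP [u uS du]|no_dom_vertex] :=
  boolP [exists u in A :|: B, dominating_in (A :|: B) [set u]].
  by exists [set u]; apply: canonical_in_set1.
have ge2 D : dominating_in (A :|: B) D -> 1 < #|D|.
  move=> dD; rewrite ltn_neqAle eq_sym card_gt0 (dominating_in_neq0 aS dD) andbT.
  apply: contra no_dom_vertex => /cards1P [u eD]; apply/exists_inP; exists u; last by rewrite -eD.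
  by rewrite (subsetP (dominating_in_sub dD)) // eD set11.
have card_ab D : dominating_in (A :|: B) D -> #|[set a; b]| <= #|D|.
  by move=> dD; apply: leq_trans (ge2 D dD); rewrite cards2 ltnS leq_b1.
have dab := dominating_in_join_pair aA bB.
exists [set a; b]; split=> // D dD.
have /set0Pn [v vD] := dominating_in_neq0 aS dD.
have [w wab dvw] : exists2 w, w \in [set a; b] & dominating_in (A :|: B) [set v; w].
  case/setUP: (subsetP (dominating_in_sub dD) v vD) => [vA|vB].
    by exists b; [rewrite !inE eqxx orbT | exact: dominating_in_join_pair vA bB].
  exists a; first by rewrite !inE eqxx.
  by rewrite [[set v; a]]setUC; exact: dominating_in_join_pair aA vB.
apply: (reconf_in_trans (Y := [set v; w])); apply: reconf_in_union => //.
  by rewrite setUA (setUidPl (_ : [set v] \subset D)) ?sub1set // setUC cardsU1_le.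
have -> : [set v; w] :|: [set a; b] = v |: [set a; b].
  by rewrite -setUA (setUidPr (_ : [set w] \subset _)) ?sub1set.
by apply: leq_trans (cardsU1_le _ _) _; rewrite ltnS card_ab.
Qed.

End Join.

Lemma cograph_on_neq0 S : cograph_on e S -> S != set0.
Proof.
elim=> [v|A B _ _ nA *|A B _ _ nA *]; first by apply/set0Pn; exists v; rewrite set11.
  by rewrite setU_eq0 negb_and nA.
by rewrite setU_eq0 negb_and nA.
Qed.

Lemma cograph_on_canonical S : symmetric e -> cograph_on e S ->
  exists Ds, canonical_in S Ds.
Proof.
move=> esym; elim=> [v|A B dAB _ [DsA cA] _ [DsB cB] noAB|A B _ nA _ nB _ allAB].
- exists [set v]; apply: canonical_in_set1 (set11 v) _.
  by rewrite /dominating_in subxx; apply/forall_inP=> x /set1P ->; rewrite set11.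
- exists (DsA :|: DsB); apply: canonical_in_union => // b a bB aA.
  by rewrite esym noAB.
- have /set0Pn [a aA] := cograph_on_neq0 nA.
  have /set0Pn [b bB] := cograph_on_neq0 nB.
  exact (canonical_in_join esym allAB aA bB).
Qed.

Lemma dominating_in_setT D : dominating_in [set: T] D = dominating e D.
Proof.
rewrite /dominating_in subsetT; apply/forall_inP/forallP=> dD v //.
exact: dD.
Qed.

Lemma reconf_in_setT k X Y : reconf_in [set: T] k X Y -> reconf e k X Y.
Proof.
elim=> [D dD Dk|D1 D2 D3 dD1 D1k adj _ [s [p l a]]].
  by exists [::]; split=> //=; rewrite -dominating_in_setT dD Dk.
by exists (D2 :: s); split=> //=; rewrite ?adj ?p // -dominating_in_setT dD1 D1k.
Qed.

End Reconfiguration.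

Theorem lemma5 (T : finType) (e : rel T) :
  symmetric e -> irreflexive e -> cograph e ->
  exists Ds : {set T}, canonical_dom e Ds.
Proof.
move=> esym _ cg; have [Ds [dDs minDs reachDs]] := cograph_on_canonical esym cg.
exists Ds; split; first split.
- by rewrite -dominating_in_setT.
- by move=> D; rewrite -dominating_in_setT; apply: minDs.
- by move=> D; rewrite -dominating_in_setT => dD; apply/reconf_in_setT/reachDs.
Qed.
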